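(* Let $(Q,P)$ be a weakly quasi-lattice ordered group and let $\Lambda$ be a finitely aligned $P$-graph (i.e. $\mathrm{FA}(\Lambda)=\Lambda$). Then the map $$G^{\mathrm{Spi}}_\Lambda\to\mathcal{G}(\Lambda),\qquad [\alpha,\beta,x]\mapsto(\alpha\cdot x,\ d(\alpha)d(\beta)^{-1},\ \beta\cdot x)$$ is a topological groupoid isomorphism. Moreover, the reductions $G^{\mathrm{Spi}}_\Lambda|_{\partial\Lambda}$ and $\partial\mathcal{G}(\Lambda)$ are topologically isomorphic.
   Context: $(Q,P)$ weakly quasi-lattice ordered: $Q$ a discrete group, $P\subseteq Q$ a subsemigroup containing the identity $e$ with $P\cap P^{-1}=\{e\}$, and, with $p\le r$ meaning $pq=r$ for some $q\in P$, any two elements of $P$ with a common upper bound have a least common upper bound. A $P$-graph is a countable small category $\Lambda$ (identities $\Lambda^{(0)}$, range/source $r,s$) with a functor $d:\Lambda\to P$ with unique factorisation (if $d(\lambda)=pq$ there are unique $\mu,\nu$ with $\lambda=\mu\nu$, $d(\mu)=p$, $d(\nu)=q$). Write $\Lambda^m=d^{-1}(m)$, $\lambda\Lambda=\{\lambda\mu: s(\lambda)=r(\mu)\}$, $\mu\preceq\lambda$ iff $\lambda\in\mu\Lambda$. $\Lambda$ is finitely aligned if for all $\mu,\nu$ there is finite $J$ with $\mu\Lambda\cap\nu\Lambda=\bigcup_{\kappa\in J}\kappa\Lambda$. A filter is a nonempty hereditary and directed subset of $\Lambda$ (w.r.t. $\preceq$); $\mathcal{F}(\Lambda)$ the filters,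 $\mathcal{U}(\Lambda)$ the maximal filters; each filter $x$ contains a unique $r(x)\in\Lambda^{(0)}$. For a filter $x$ with $r(x)=s(\alpha)$, $\alpha\cdot x=\{\zeta: \zeta\preceq\alpha\gamma\text{ for some }\gamma\in x\}$. $\mathcal{F}(\Lambda)$ has the subspace topology from $\mathcal{P}(\Lambda)\cong\{0,1\}^\Lambda$ (product topology). Since $\Lambda$ is finitely aligned, the path space is $\mathcal{F}(\Lambda)$. For $x\in\mathcal{F}(\Lambda)$, $m\in P$ with $x\cap\Lambda^m\neq\emptyset$ (write $x\in\mathrm{dom}(m)$), $x(0,m)$ is the unique element of $x\cap\Lambda^m$ and $x\cdot m=\{\mu: x(0,m)\mu\in x\}$. The path groupoid $\mathcal{G}(\Lambda)$ is the set of $(x,q,y)\in\mathcal{F}(\Lambda)\times Q\times\mathcal{F}(\Lambda)$ such that $q=mn^{-1}$, $x\in\mathrm{dom}(m)$, $y\in\mathrm{dom}(n)$, $x\cdot m=y\cdot n$ for some $m,n\in P$; product $(x,q,y)(y,r,z)=(x,qr,z)$, inverse $(y,q^{-1},x)$; topology with basis $\{(x,mn^{-1},y)\in\mathcal{G}(\Lambda): x\in U, y\in V, x\cdot m=y\cdot n\}$, $m,n\in P$, $U,V$ open. The boundary-path groupoid $\partial\mathcal{G}(\Lambda)$ is the reduction of $\mathcal{G}(\Lambda)$ (unit space identified with $\mathcal{F}(\Lambda)$ via $x\mapsto(x,e,x)$) to the closure $\partial\Lambda$ of $\mathcal{U}(\Lambda)$ in $\mathcal{F}(\Lambda)$. Spielberg's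 groupoid: for $\alpha\in\Lambda$ and $\beta_1,\dots,\beta_n\in\alpha\Lambda\setminus\{\alpha\}$, put $E=\alpha\Lambda\setminus\bigcup_i\beta_i\Lambda$ and $\hat E=\{x\in\mathcal{F}(\Lambda): x\cap\gamma\Lambda\subseteq E\text{ for some }\gamma\in x\}$; the sets $\hat E$ form a basis of a topology $\tau$ on $\mathcal{F}(\Lambda)$. On $\{(\alpha,\beta,x)\in\Lambda\times\Lambda\times\mathcal{F}(\Lambda): s(\alpha)=s(\beta)=r(x)\}$ set $(\alpha,\beta,x)\sim(\alpha',\beta',x')$ iff there are $y\in\mathcal{F}(\Lambda)$, $\gamma,\gamma'\in\Lambda$ with $x=\gamma\cdot y$, $x'=\gamma'\cdot y$, $\alpha\gamma=\alpha'\gamma'$, $\beta\gamma=\beta'\gamma'$; this is an equivalence relation, and $G^{\mathrm{Spi}}_\Lambda$ is the set of classes $[\alpha,\beta,x]$. A pair $([\alpha,\beta,x],[\gamma,\delta,y])$ is composable iff $\beta\cdot x=\gamma\cdot y$; then there are $z\in\mathcal{F}(\Lambda)$, $\xi,\eta\in\Lambda$ with $x=\xi\cdot z$, $y=\eta\cdot z$, $\beta\xi=\gamma\eta$, and the product is $[\alpha\xi,\delta\eta,z]$; inverse $[\alpha,\beta,x]^{-1}=[\beta,\alpha,x]$. Its topology has basis the sets $[\alpha,\beta,B]=\{[\alpha,\beta,x]: x\in B\}$ for $B$ in a basis of $\tau$. $G^{\mathrm{Spi}}_\Lambda|_{\partial\Lambda}$ is its reduction to $\partial\Lambda$ (unit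 space identified with $\mathcal{F}(\Lambda)$ via $x\mapsto[r(x),r(x),x]$). *)

From Stdlib Require Import List.
Import ListNotations.

Record Group := {
  Qc :> Type;
  qmul : Qc -> Qc -> Qc;
  qone : Qc;
  qinv : Qc -> Qc;
  qmul_assoc : forall a b c, qmul a (qmul b c) = qmul (qmul a b) c;
  qmul_1l : forall a, qmul qone a = a;
  qmul_1r : forall a, qmul a qone = a;
  qmul_Vl : forall a, qmul (qinv a) a = qone;
  qmul_Vr : forall a, qmul a (qinv a) = qone
}.
Arguments qmul {g}. Arguments qone {g}. Arguments qinv {g}.

Definition Ple {Q : Group} (P : Q -> Prop) (p r : Q) : Prop :=
  exists q, P q /\ qmul p q = r.

Record WQLO := {
  Qgrp :> Group;
  Pset : Qgrp -> Prop;
  P_one : Pset qone;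
  P_mul : forall p q, Pset p -> Pset q -> Pset (qmul p q);
  P_cap_Pinv : forall p, Pset p -> Pset (qinv p) -> p = qone;
  P_wqlo : forall p q, Pset p -> Pset q ->
    (exists r, Pset r /\ Ple Pset p r /\ Ple Pset q r) ->
    exists l, Pset l /\ Ple Pset p l /\ Ple Pset q l /\
      (forall u, Pset u -> Ple Pset p u -> Ple Pset q u -> Ple Pset l u)
}.

Record PGraph (W : WQLO) := {
  Obj : Type;
  Mor : Type;
  vid : Obj -> Mor;                 (* identity morphisms = Lambda^(0) *)
  rng : Mor -> Obj;
  src : Mor -> Obj;
  comp : Mor -> Mor -> Mor;         (* composition, meaningful when src mu = rng nu *)
  deg : Mor -> W;
  Obj_countable : exists f : Obj -> nat, forall a b, f a = f b -> a = b;
  Mor_countable : exists f : Mor -> nat, forall a b, f a = f b -> a = b;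
  src_vid : forall v, src (vid v) = v;
  rng_vid : forall v, rng (vid v) = v;
  rng_comp : forall m n, src m = rng n -> rng (comp m n) = rng m;
  src_comp : forall m n, src m = rng n -> src (comp m n) = src n;
  comp_vid_l : forall l, comp (vid (rng l)) l = l;
  comp_vid_r : forall l, comp l (vid (src l)) = l;
  comp_assoc : forall a b c, src a = rng b -> src b = rng c ->
     comp a (comp b c) = comp (comp a b) c;
  deg_P : forall l, Pset W (deg l);
  deg_vid : forall v, deg (vid v) = qone;
  deg_comp : forall m n, src m = rng n -> deg (comp m n) = qmul (deg m) (deg n);
  unique_factorisation : forall l p q, Pset W p -> Pset W q ->
     deg l = qmul p q ->
     exists m n, (src m = rng n /\ l = comp m n /\ deg m = p /\ deg n = q) /\
       forall m' n', src m' = rng n' -> l = comp m' n' -> deg m' = p -> deg n' = q ->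
         m' = m /\ n' = n
}.
Arguments Obj {W}. Arguments Mor {W}. Arguments vid {W p0}. Arguments rng {W p0}.
Arguments src {W p0}. Arguments comp {W p0}. Arguments deg {W p0}.

Section PG.
Context {W : WQLO} (L : PGraph W).

Definition preceq (m l : Mor L) : Prop := exists n, src m = rng n /\ l = comp m n.

Definition finitely_aligned : Prop :=
  forall m n : Mor L, exists J : list (Mor L),
    forall l, (preceq m l /\ preceq n l) <-> exists k, In k J /\ preceq k l.

Definition same (A B : Mor L -> Prop) : Prop := forall z, A z <-> B z.

Definition is_filter (x : Mor L -> Prop) : Prop :=
  (exists l, x l) /\
  (forall m l, preceq m l -> x l -> x m) /\
  (forall l m, x l -> x m -> exists n, x n /\ preceq l n /\ preceq m n).

Definition Filt := { x : Mor L -> Prop | is_filter x }.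

(* topology on F(Λ): subspace of the product topology on {0,1}^Λ,
   basis = cylinder sets *)
Definition cyl (A B : list (Mor L)) (x : Filt) : Prop :=
  (forall a, In a A -> proj1_sig x a) /\ (forall b, In b B -> ~ proj1_sig x b).

Definition F_open (U : Filt -> Prop) : Prop :=
  forall x, U x -> exists A B, cyl A B x /\ forall y, cyl A B y -> U y.

Definition maximal_filter (x : Filt) : Prop :=
  forall y : Filt, (forall l, proj1_sig x l -> proj1_sig y l) ->
    forall l, proj1_sig y l -> proj1_sig x l.

Definition bdry (x : Filt) : Prop :=
  forall U, F_open U -> U x -> exists y, U y /\ maximal_filter y.

(* x ∈ dom(m), x·m  (x(0,m) is the unique element of x of degree m) *)
Definition in_dom (x : Filt) (m : W) : Prop :=
  exists l, proj1_sig x l /\ deg l = m.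

Definition shift (x : Filt) (m : W) (mu : Mor L) : Prop :=
  exists l, proj1_sig x l /\ deg l = m /\ src l = rng mu /\ proj1_sig x (comp l mu).

Definition rfilt (x : Filt) (v : Obj L) : Prop := proj1_sig x (vid v).

(* alpha · x  (used when r(x) = s(alpha)) *)
Definition dot (a : Mor L) (x : Filt) (z : Mor L) : Prop :=
  exists g, proj1_sig x g /\ src a = rng g /\ preceq z (comp a g).

End PG.

Record TopGroupoid := {
  gcar :> Type;
  gcomposable : gcar -> gcar -> Prop;
  gprod : gcar -> gcar -> gcar -> Prop;     (* gprod a b c : c = a b *)
  ginv : gcar -> gcar -> Prop;              (* ginv a b : b = a^{-1} *)
  gopen : (gcar -> Prop) -> Prop
}.

Definition bijective {A B : Type} (f : A -> B) : Prop :=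
  (forall a a', f a = f a' -> a = a') /\ (forall b, exists a, f a = b).

Definition TG_iso (G H : TopGroupoid) (f : G -> H) : Prop :=
  bijective f /\
  (forall a b, gcomposable G a b <-> gcomposable H (f a) (f b)) /\
  (forall a b c, gprod G a b c <-> gprod H (f a) (f b) (f c)) /\
  (forall a b, ginv G a b <-> ginv H (f a) (f b)) /\
  (forall V : H -> Prop, gopen H V <-> gopen G (fun a => V (f a))).

(* reduction of G to a set X of units: elements g with r(g)=g g^{-1} ∈ X and
   s(g)=g^{-1} g ∈ X; subspace topology *)
Definition in_reduction (G : TopGroupoid) (X : G -> Prop) (g : G) : Prop :=
  exists h u w, ginv G g h /\ gprod G g h u /\ gprod G h g w /\ X u /\ X w.

Definition reduction (G : TopGroupoid) (X : G -> Prop) : TopGroupoid := {|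
  gcar := { g : G | in_reduction G X g };
  gcomposable := fun a b => gcomposable G (proj1_sig a) (proj1_sig b);
  gprod := fun a b c => gprod G (proj1_sig a) (proj1_sig b) (proj1_sig c);
  ginv := fun a b => ginv G (proj1_sig a) (proj1_sig b);
  gopen := fun U => exists V, gopen G V /\ forall g, U g <-> V (proj1_sig g)
|}.

Section Groupoids.
Context {W : WQLO} (L : PGraph W).

Definition inG (t : Filt L * W * Filt L) : Prop :=
  let '(x, q, y) := t in
  exists m n, Pset W m /\ Pset W n /\ q = qmul m (qinv n) /\
    in_dom L x m /\ in_dom L y n /\ same L (shift L x m) (shift L y n).

Definition GPath := { t : Filt L * W * Filt L | inG t }.

Definition gp_x (g : GPath) : Filt L := fst (fst (proj1_sig g)).
Definition gp_q (g : GPath) : W := snd (fst (proj1_sig g)).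
Definition gp_y (g : GPath) : Filt L := snd (proj1_sig g).

Definition Zbasic (m n : W) (U V : Filt L -> Prop) (g : GPath) : Prop :=
  gp_q g = qmul m (qinv n) /\ in_dom L (gp_x g) m /\ in_dom L (gp_y g) n /\
  same L (shift L (gp_x g) m) (shift L (gp_y g) n) /\ U (gp_x g) /\ V (gp_y g).

Definition GPath_open (O : GPath -> Prop) : Prop :=
  forall g, O g -> exists m n U V, Pset W m /\ Pset W n /\ F_open L U /\ F_open L V /\
    Zbasic m n U V g /\ forall g', Zbasic m n U V g' -> O g'.

Definition PathTG : TopGroupoid := {|
  gcar := GPath;
  gcomposable := fun a b => gp_y a = gp_x b;
  gprod := fun a b c => gp_y a = gp_x b /\
     proj1_sig c = (gp_x a, qmul (gp_q a) (gp_q b), gp_y b);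
  ginv := fun a b => proj1_sig b = (gp_y a, qinv (gp_q a), gp_x a);
  gopen := GPath_open
|}.

Definition path_units_bd (u : PathTG) : Prop :=
  exists x, bdry L x /\ proj1_sig u = (x, qone, x).

Definition Triple := (Mor L * Mor L * Filt L)%type.

Definition valid (t : Triple) : Prop :=
  let '(a, b, x) := t in src a = src b /\ rfilt L x (src a).

Definition spi_rel (t t' : Triple) : Prop :=
  let '(a, b, x) := t in let '(a', b', x') := t' in
  exists (y : Filt L) (g g' : Mor L),
    rfilt L y (src g) /\ rfilt L y (src g') /\
    src a = rng g /\ src b = rng g /\ src a' = rng g' /\ src b' = rng g' /\
    same L (proj1_sig x) (dot L g y) /\ same L (proj1_sig x') (dot L g' y) /\
    comp a g = comp a' g' /\ comp b g = comp b' g'.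

Definition SpiG := { C : Triple -> Prop |
  exists t, valid t /\ forall u, C u <-> (valid u /\ spi_rel t u) }.

Definition spi_composable (A B : SpiG) : Prop :=
  exists a b x c d y, proj1_sig A (a, b, x) /\ proj1_sig B (c, d, y) /\
    same L (dot L b x) (dot L c y).

Definition spi_prod (A B C : SpiG) : Prop :=
  exists a b x c d y (z : Filt L) xi eta,
    proj1_sig A (a, b, x) /\ proj1_sig B (c, d, y) /\
    same L (dot L b x) (dot L c y) /\
    rfilt L z (src xi) /\ rfilt L z (src eta) /\
    src a = rng xi /\ src b = rng xi /\ src c = rng eta /\ src d = rng eta /\
    same L (proj1_sig x) (dot L xi z) /\ same L (proj1_sig y) (dot L eta z) /\
    comp b xi = comp c eta /\
    proj1_sig C (comp a xi, comp d eta, z).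

Definition spi_inv (A B : SpiG) : Prop :=
  exists a b x, proj1_sig A (a, b, x) /\ proj1_sig B (b, a, x).

(* basis of τ: the sets Ê, E = αΛ \ ⋃_i β_i Λ, β_i ∈ αΛ \ {α} *)
Definition tau_basic (B : Filt L -> Prop) : Prop :=
  exists (a : Mor L) (bs : list (Mor L)),
    (forall b, In b bs -> preceq L a b /\ b <> a) /\
    forall x, B x <-> exists g, proj1_sig x g /\
      forall z, proj1_sig x z -> preceq L g z ->
        (preceq L a z /\ forall b, In b bs -> ~ preceq L b z).

Definition Sbasic (a b : Mor L) (B : Filt L -> Prop) (C : SpiG) : Prop :=
  exists x, B x /\ proj1_sig C (a, b, x).

Definition SpiG_open (O : SpiG -> Prop) : Prop :=
  forall C, O C -> exists a b B, tau_basic B /\ Sbasic a b B C /\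
    forall C', Sbasic a b B C' -> O C'.

Definition SpiTG : TopGroupoid := {|
  gcar := SpiG;
  gcomposable := spi_composable;
  gprod := spi_prod;
  ginv := spi_inv;
  gopen := SpiG_open
|}.

Definition spi_units_bd (U : SpiTG) : Prop :=
  exists x v, bdry L x /\ rfilt L x v /\ proj1_sig U (vid v, vid v, x).

End Groupoids.

From Stdlib Require Import List Classical FunctionalExtensionality PropExtensionality
  ProofIrrelevance ClassicalEpsilon.
Import ListNotations.

(* Two triples are equivalent exactly when
   they have the same image: if α·x = α'·x', directedness of α·x gives a common
   extension αξ = α'η in it, and with z = (α·x)·d(αξ) one gets x = ξ·z, x' = η·z,
   because a filter y with r(y) = s(α) is recovered from α·y as (α·y)·d(α).  The same
   factorisation matches the products; (x, mn⁻¹, y) is the image of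
   [x(0,m), y(0,n), x·m], which gives surjectivity.  For the topologies: x ↦ α·x is
   continuous for the cylinder topology since, Λ being finitely aligned, "β ∉ α·x" is a
   finite conjunction of conditions "μ ∉ x"; every cylinder neighbourhood of a filter
   contains a basic set Ê around it; and x ↦ x·d(α) is continuous on {x : α ∈ x}.  The
   units [r(x),r(x),x] correspond to the units (x,e,x), so the reductions to ∂Λ match. *)

Lemma pred_ext {A : Type} (P Q : A -> Prop) : (forall z, P z <-> Q z) -> P = Q.
Proof.
  intro H. apply functional_extensionality. intro z. apply propositional_extensionality, H.
Qed.

Lemma sig_ext {A : Type} {P : A -> Prop} (a b : {x : A | P x}) :
  proj1_sig a = proj1_sig b -> a = b.
Proof.
  destruct a as [a ha], b as [b hb]. simpl. intros <-. f_equal. apply proof_irrelevance.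
Qed.

Lemma list_filter_ex {T : Type} (P : T -> Prop) (l : list T) :
  exists l', forall t, In t l' <-> In t l /\ P t.
Proof.
  induction l as [|t l [l' IH]].
  - exists []. simpl. tauto.
  - destruct (classic (P t)) as [Ht|Ht]; [exists (t :: l')|exists l']; intro u; simpl; rewrite IH;
      split; intuition (subst; tauto).
Qed.

Section GroupFacts.
Context {G : Group}.
Implicit Types a b c d g h : G.

Lemma mul_cancel_l a b c : qmul a b = qmul a c -> b = c.
Proof.
  intro H. rewrite <- (qmul_1l _ b), <- (qmul_1l _ c), <- (qmul_Vl _ a), <- !qmul_assoc, H.
  reflexivity.
Qed.

Lemma inv_mul a b : qinv (qmul a b) = qmul (qinv b) (qinv a).
Proof.
  apply (mul_cancel_l (qmul a b)).
  rewrite qmul_Vr, <- qmul_assoc, (qmul_assoc _ b), qmul_Vr, qmul_1l, qmul_Vr.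
  reflexivity.
Qed.

Lemma inv_inv a : qinv (qinv a) = a.
Proof. apply (mul_cancel_l (qinv a)). rewrite qmul_Vr, qmul_Vl. reflexivity. Qed.

Lemma frac_inv a b : qinv (qmul a (qinv b)) = qmul b (qinv a).
Proof. rewrite inv_mul, inv_inv. reflexivity. Qed.

Lemma frac_mul_r a b g : qmul (qmul a g) (qinv (qmul b g)) = qmul a (qinv b).
Proof.
  rewrite inv_mul, <- qmul_assoc, (qmul_assoc _ g), qmul_Vr, qmul_1l. reflexivity.
Qed.

Lemma frac_mul_cancel a b g : qmul (qmul a (qinv b)) (qmul b g) = qmul a g.
Proof.
  rewrite <- qmul_assoc, (qmul_assoc _ (qinv b)), qmul_Vl, qmul_1l. reflexivity.
Qed.

Lemma frac_mul a b c d g h : qmul b g = qmul c h ->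
  qmul (qmul a g) (qinv (qmul d h)) = qmul (qmul a (qinv b)) (qmul c (qinv d)).
Proof.
  intro E. rewrite <- (frac_mul_cancel a b g), E, inv_mul, <- !qmul_assoc.
  rewrite (qmul_assoc _ h), qmul_Vr, qmul_1l. reflexivity.
Qed.

Lemma mul_eq_of_frac_eq a b c d g h : qmul a (qinv b) = qmul c (qinv d) ->
  qmul a g = qmul c h -> qmul b g = qmul d h.
Proof.
  intros Ef E. rewrite <- (frac_mul_cancel b a g), <- (frac_mul_cancel d c h), <- (frac_inv a b),
    <- (frac_inv c d), Ef, E.
  reflexivity.
Qed.

End GroupFacts.

Section Reduction.
Variables (G H : TopGroupoid) (f : G -> H) (X : G -> Prop) (Y : H -> Prop).
Hypotheses (f_iso : TG_iso G H f) (f_units : forall u, X u <-> Y (f u)).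

Lemma in_reduction_iso g : in_reduction G X g <-> in_reduction H Y (f g).
Proof.
  destruct f_iso as [[_ f_surj] [_ [f_prod [f_inv _]]]]. split.
  - intros (h & u & w & Hh & Hu & Hw & Xu & Xw). exists (f h), (f u), (f w).
    rewrite <- f_inv, <- !f_prod, <- !f_units. auto.
  - intros (h' & u' & w' & Hh & Hu & Hw & Yu & Yw).
    destruct (f_surj h') as [h <-], (f_surj u') as [u <-], (f_surj w') as [w <-].
    exists h, u, w. rewrite f_inv, !f_prod, !f_units. auto.
Qed.

Definition reduction_map (g : reduction G X) : reduction H Y :=
  exist _ (f (proj1_sig g)) (proj1 (in_reduction_iso _) (proj2_sig g)).

Lemma reduction_map_iso : TG_iso (reduction G X) (reduction H Y) reduction_map.
Proof.
  destruct f_iso as [[f_inj f_surj] [f_comp [f_prod [f_inv f_open]]]].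
  assert (lift : forall g (hg : in_reduction H Y (f g)),
    exist _ (f g) hg = reduction_map (exist _ g (proj2 (in_reduction_iso g) hg)))
    by (intros; apply sig_ext; reflexivity).
  split; [split|split; [|split; [|split]]].
  - intros a a' E. apply sig_ext, f_inj. exact (f_equal (@proj1_sig _ _) E).
  - intros [p hp]. destruct (f_surj p) as [g <-]. eexists. symmetry. apply lift.
  - intros a b. apply f_comp.
  - intros a b c. apply f_prod.
  - intros a b. apply f_inv.
  - intro V. split.
    + intros (V0 & O0 & E0). exists (fun g => V0 (f g)). split; [apply f_open, O0|].
      intro g. apply E0.
    + intros (V1 & O1 & E1). exists (fun p => exists g, f g = p /\ V1 g). split.
      * apply f_open. replace (fun a => exists g, f g = f a /\ V1 g) with V1; [exact O1|].
        apply pred_ext. intro a. split; [now exists a|].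
        intros (g & E & Hg). apply f_inj in E. now subst.
      * intros [p hp]. destruct (f_surj p) as [g <-]. simpl. rewrite lift, E1. simpl.
        split; [now exists g|]. intros (g' & E & Hg'). apply f_inj in E. now subst.
Qed.

End Reduction.

Section PGraphFacts.
Context {W : WQLO} (L : PGraph W).
Local Notation pre := (preceq L).
Local Notation M := (Mor L).

Lemma preceq_refl (l : M) : pre l l.
Proof. exists (vid (src l)). rewrite rng_vid, comp_vid_r. auto. Qed.

Lemma preceq_comp (a g : M) : src a = rng g -> pre a (comp a g).
Proof. intro H. now exists g. Qed.

Lemma rng_preceq (a l : M) : pre a l -> rng l = rng a.
Proof. intros (k & H & ->). apply rng_comp, H. Qed.

Lemma preceq_trans (a b c : M) : pre a b -> pre b c -> pre a c.
Proof.
  intros (k & Hk & ->) (k' & Hk' & ->). rewrite src_comp in Hk' by exact Hk.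
  exists (comp k k'). rewrite rng_comp, comp_assoc by assumption. auto.
Qed.

Lemma vid_preceq (l : M) : pre (vid (rng l)) l.
Proof. exists l. rewrite src_vid, comp_vid_l. auto. Qed.

Lemma preceq_comp2l (a g h : M) : src a = rng g -> pre g h -> pre (comp a g) (comp a h).
Proof.
  intros H (k & Hk & ->). exists k. rewrite src_comp, comp_assoc by assumption. auto.
Qed.

Lemma comp_cancel_l (a g h : M) :
  src a = rng g -> src a = rng h -> comp a g = comp a h -> g = h.
Proof.
  intros Hg Hh E.
  assert (Dg : deg (comp a g) = qmul (deg a) (deg g)) by (apply deg_comp, Hg).
  assert (Dh : deg h = deg g).
  { apply (mul_cancel_l (deg a)). rewrite <- !deg_comp, E by assumption. reflexivity. }
  destruct (unique_factorisation W L _ _ _ (deg_P W L a) (deg_P W L g) Dg) as (? & ? & _ & U).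
  destruct (U a g Hg eq_refl eq_refl eq_refl) as [_ ->].
  destruct (U a h Hh E eq_refl Dh) as [_ ->]. reflexivity.
Qed.

Lemma preceq_cancel_l (a g h : M) :
  src a = rng g -> src a = rng h -> pre (comp a g) (comp a h) -> pre g h.
Proof.
  intros Hg Hh (k & Hk & E). rewrite src_comp in Hk by exact Hg.
  exists k. split; [exact Hk|]. rewrite <- comp_assoc in E by assumption.
  apply comp_cancel_l in E; [exact E|exact Hh|]. rewrite rng_comp; assumption.
Qed.

Lemma preceq_deg_inj (a b l : M) : pre a l -> pre b l -> deg a = deg b -> a = b.
Proof.
  intros (k & Hk & El) (k' & Hk' & El') D.
  assert (Dl : deg l = qmul (deg a) (deg k)) by (rewrite El; apply deg_comp, Hk).
  assert (Dk : deg k' = deg k).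
  { apply (mul_cancel_l (deg a)). rewrite <- Dl, D, El'. symmetry. apply deg_comp, Hk'. }
  destruct (unique_factorisation W L _ _ _ (deg_P W L a) (deg_P W L k) Dl) as (? & ? & _ & U).
  destruct (U a k Hk El eq_refl eq_refl) as [-> _].
  destruct (U b k' Hk' El' (eq_sym D) Dk) as [-> _]. reflexivity.
Qed.

Section Filter.
Variable X : M -> Prop.
Hypothesis X_filter : is_filter L X.

Lemma filter_nonempty : exists l, X l.
Proof. apply X_filter. Qed.

Lemma filter_hered (m l : M) : pre m l -> X l -> X m.
Proof. apply X_filter. Qed.

Lemma filter_directed (l m : M) : X l -> X m -> exists n, X n /\ pre l n /\ pre m n.
Proof. apply X_filter. Qed.

Lemma filter_vid (l : M) : X l -> X (vid (rng l)).
Proof. apply filter_hered, vid_preceq. Qed.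

Lemma filter_vid_unique (v w : Obj L) : X (vid v) -> X (vid w) -> v = w.
Proof.
  intros Hv Hw. destruct (filter_directed _ _ Hv Hw) as (n & _ & Hvn & Hwn).
  apply rng_preceq in Hvn, Hwn. rewrite rng_vid in Hvn, Hwn. congruence.
Qed.

Lemma filter_rng (v : Obj L) (l : M) : X (vid v) -> X l -> rng l = v.
Proof. intros Hv Hl. apply filter_vid in Hl. exact (filter_vid_unique _ _ Hl Hv). Qed.

Lemma filter_deg_inj (a b : M) : X a -> X b -> deg a = deg b -> a = b.
Proof.
  intros Ha Hb. destruct (filter_directed _ _ Ha Hb) as (n & _ & Han & Hbn).
  exact (preceq_deg_inj _ _ _ Han Hbn).
Qed.

Lemma filter_upper_bound (A : list M) :
  (forall a, In a A -> X a) -> exists n, X n /\ forall a, In a A -> pre a n.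
Proof.
  induction A as [|a A IH]; intro HA.
  - destruct filter_nonempty as [l Hl]. now exists l.
  - destruct IH as (n & Hn & Hall); [intros; apply HA; now right|].
    destruct (filter_directed a n) as (k & Hk & Hak & Hnk); [apply HA; now left|exact Hn|].
    exists k. split; [exact Hk|]. intros b [<-|Hb]; [exact Hak|].
    exact (preceq_trans _ _ _ (Hall b Hb) Hnk).
Qed.

End Filter.

(* [dot] and [shift] of the definitions, on plain sets of paths: [dot L a x] and
   [shift L x m] unfold to [pdot a (proj1_sig x)] and [pshift (proj1_sig x) m]. *)
Definition pdot (a : M) (X : M -> Prop) : M -> Prop :=
  fun z => exists g, X g /\ src a = rng g /\ pre z (comp a g).

Definition pshift (Y : M -> Prop) (m : W) : M -> Prop :=
  fun mu => exists l, Y l /\ deg l = m /\ src l = rng mu /\ Y (comp l mu).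

Lemma dot_comp_mem (a g : M) (X : M -> Prop) : X g -> src a = rng g -> pdot a X (comp a g).
Proof. intros Hg H. exists g. auto using preceq_refl. Qed.

Lemma dot_self (a : M) (X : M -> Prop) : X (vid (src a)) -> pdot a X a.
Proof.
  intro Hv. rewrite <- (comp_vid_r W L a) at 2. apply dot_comp_mem; [exact Hv|].
  now rewrite rng_vid.
Qed.

Lemma dot_filter (a : M) (X : M -> Prop) :
  is_filter L X -> X (vid (src a)) -> is_filter L (pdot a X).
Proof.
  intros FX Hv. split; [|split].
  - exists a. now apply dot_self.
  - intros m l Hml (g & Hg & Hs & Hl). exists g. eauto using preceq_trans.
  - intros l m (g1 & Hg1 & Hs1 & Hl) (g2 & Hg2 & Hs2 & Hm).
    destruct (filter_directed X FX _ _ Hg1 Hg2) as (n & Hn & H1n & H2n).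
    assert (Hs : src a = rng n) by (rewrite (rng_preceq _ _ H1n); exact Hs1).
    exists (comp a n). split; [now apply dot_comp_mem|].
    split; eapply preceq_trans; eauto using preceq_comp2l.
Qed.

Lemma dot_vid (v : Obj L) (X : M -> Prop) : is_filter L X -> X (vid v) -> pdot (vid v) X = X.
Proof.
  intros FX Hv. apply pred_ext. intro z. split.
  - intros (g & Hg & Hs & Hz). rewrite src_vid in Hs. rewrite Hs, comp_vid_l in Hz.
    exact (filter_hered X FX _ _ Hz Hg).
  - intro Hz. rewrite <- (filter_rng X FX v z Hv Hz). exists z.
    rewrite src_vid, comp_vid_l. auto using preceq_refl.
Qed.

Lemma dot_comp (a g : M) (X : M -> Prop) :
  src a = rng g -> pdot a (pdot g X) = pdot (comp a g) X.
Proof.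
  intro H. apply pred_ext. intro z. split.
  - intros (h & (k & Hk & Hs & Hhk) & Hs' & Hz). exists k.
    rewrite src_comp, <- comp_assoc by assumption.
    split; [exact Hk|]. split; [exact Hs|].
    exact (preceq_trans _ _ _ Hz (preceq_comp2l _ _ _ Hs' Hhk)).
  - intros (k & Hk & Hs & Hz). rewrite src_comp in Hs by exact H.
    exists (comp g k). split; [now apply dot_comp_mem|].
    rewrite rng_comp, comp_assoc by assumption. auto.
Qed.

Lemma shift_vid (Y : M -> Prop) (n : M) : Y n -> pshift Y (deg n) (vid (src n)).
Proof. intro Hn. exists n. rewrite rng_vid, comp_vid_r. auto. Qed.

Lemma shift_at (Y : M -> Prop) (a mu : M) : is_filter L Y -> Y a ->
  pshift Y (deg a) mu <-> src a = rng mu /\ Y (comp a mu).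
Proof.
  intros FY Ha. split.
  - intros (l & Hl & Dl & Hs & Hc). rewrite <- (filter_deg_inj Y FY _ _ Hl Ha Dl). auto.
  - intros [Hs Hc]. now exists a.
Qed.

Lemma shift_filter (Y : M -> Prop) (n : M) : is_filter L Y -> Y n -> is_filter L (pshift Y (deg n)).
Proof.
  intros FY Hn. split; [|split].
  - exists (vid (src n)). now apply shift_vid.
  - intros m l (k & Hk & ->) Hl. apply (shift_at Y n _ FY Hn) in Hl. destruct Hl as [Hs Hl].
    rewrite rng_comp in Hs by exact Hk. apply (shift_at Y n _ FY Hn). split; [exact Hs|].
    exact (filter_hered Y FY _ _ (preceq_comp2l _ _ _ Hs (preceq_comp _ _ Hk)) Hl).
  - intros m1 m2 Hm1 Hm2.
    apply (shift_at Y n _ FY Hn) in Hm1, Hm2. destruct Hm1 as [Hs1 Hm1], Hm2 as [Hs2 Hm2].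
    destruct (filter_directed Y FY _ _ Hm1 Hm2) as (k & Hk & H1k & H2k).
    destruct (preceq_trans _ _ _ (preceq_comp _ _ Hs1) H1k) as (nu & Hs & ->).
    exists nu. split; [now apply (shift_at Y n _ FY Hn)|].
    split; eapply preceq_cancel_l; eauto.
Qed.

Lemma shift_dot (a : M) (X : M -> Prop) :
  is_filter L X -> X (vid (src a)) -> pshift (pdot a X) (deg a) = X.
Proof.
  intros FX Hv. apply pred_ext. intro mu.
  rewrite (shift_at _ a mu (dot_filter a X FX Hv) (dot_self a X Hv)). split.
  - intros [Hs (g & Hg & Hs' & Hp)]. apply preceq_cancel_l in Hp; [|exact Hs|exact Hs'].
    exact (filter_hered X FX _ _ Hp Hg).
  - intro Hmu. assert (Hs : src a = rng mu) by (symmetry; exact (filter_rng X FX _ _ Hv Hmu)).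
    split; [exact Hs|]. now apply dot_comp_mem.
Qed.

Lemma dot_shift (Y : M -> Prop) (n : M) : is_filter L Y -> Y n -> pdot n (pshift Y (deg n)) = Y.
Proof.
  intros FY Hn. apply pred_ext. intro z. split.
  - intros (g & Hg & Hs & Hz). apply (shift_at Y n _ FY Hn) in Hg.
    exact (filter_hered Y FY _ _ Hz (proj2 Hg)).
  - intro Hz. destruct (filter_directed Y FY _ _ Hz Hn) as (k & Hk & Hzk & g & Hs & ->).
    exists g. split; [now apply (shift_at Y n _ FY Hn)|]. auto.
Qed.

Lemma dot_inj (a : M) (X Y : M -> Prop) : is_filter L X -> is_filter L Y ->
  X (vid (src a)) -> Y (vid (src a)) -> pdot a X = pdot a Y -> X = Y.
Proof.
  intros FX FY HX HY E. rewrite <- (shift_dot a X FX HX), E. exact (shift_dot a Y FY HY).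
Qed.

Lemma dot_shift_factor (V w : M -> Prop) (a k : M) : is_filter L V -> is_filter L w ->
  V (vid (src a)) -> src a = rng k -> w (comp a k) -> pdot a V = w ->
  V = pdot k (pshift w (deg (comp a k))).
Proof.
  intros FV Fw Hv Hs Hak E.
  assert (FZ : is_filter L (pshift w (deg (comp a k)))) by (apply shift_filter; assumption).
  assert (HZ : pshift w (deg (comp a k)) (vid (src k))).
  { rewrite <- (src_comp W L a k Hs). now apply shift_vid. }
  apply (dot_inj a); [exact FV|now apply dot_filter|exact Hv| |].
  - rewrite Hs. exact (filter_hered _ (dot_filter _ _ FZ HZ) _ _ (vid_preceq k) (dot_self _ _ HZ)).
  - rewrite dot_comp, dot_shift; assumption.
Qed.

Lemma dot_eq_factor (b c : M) (X Y : M -> Prop) : is_filter L X -> is_filter L Y ->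
  X (vid (src b)) -> Y (vid (src c)) -> pdot b X = pdot c Y ->
  exists Z xi eta, is_filter L Z /\ Z (vid (src xi)) /\ Z (vid (src eta)) /\
    src b = rng xi /\ src c = rng eta /\ X = pdot xi Z /\ Y = pdot eta Z /\
    comp b xi = comp c eta.
Proof.
  intros FX FY Hb Hc E.
  assert (Fw : is_filter L (pdot b X)) by (apply dot_filter; assumption).
  assert (Hcw : pdot b X c) by (rewrite E; now apply dot_self).
  destruct (filter_directed _ Fw _ _ (dot_self b X Hb) Hcw)
    as (n & Hn & (xi & Hxi & Exi) & (eta & Heta & Eeta)).
  set (Z := pshift (pdot b X) (deg n)).
  assert (HZ : Z (vid (src n))) by now apply shift_vid.
  exists Z, xi, eta. split; [now apply shift_filter|].
  split; [rewrite Exi, src_comp in HZ by exact Hxi; exact HZ|].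
  split; [rewrite Eeta, src_comp in HZ by exact Heta; exact HZ|].
  do 2 (split; [assumption|]). split; [|split; [|congruence]].
  - unfold Z. rewrite Exi in *. apply dot_shift_factor; auto.
  - unfold Z. rewrite Eeta in *. rewrite E in *. apply dot_shift_factor; auto.
Qed.

End PGraphFacts.

Section SpielbergToPath.
Context {W : WQLO} (L : PGraph W).
Local Notation M := (Mor L).
Local Notation pdot := (pdot L).
Local Notation pshift := (pshift L).

Lemma same_of_eq (P Q : M -> Prop) : P = Q -> same L P Q.
Proof. intros ->. split; auto. Qed.

Definition path_coords (g : GPath L) : (M -> Prop) * W * (M -> Prop) :=
  (proj1_sig (gp_x L g), gp_q L g, proj1_sig (gp_y L g)).

Definition triple_coords (t : Triple L) : (M -> Prop) * W * (M -> Prop) :=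
  let '(a, b, x) := t in
  (pdot a (proj1_sig x), qmul (deg a) (qinv (deg b)), pdot b (proj1_sig x)).

Lemma path_eq_iff_coords (g : GPath L) x q y :
  proj1_sig g = (x, q, y) <-> path_coords g = (proj1_sig x, q, proj1_sig y).
Proof.
  destruct g as [[[x0 q0] y0] hg]. unfold path_coords, gp_x, gp_q, gp_y. simpl. split.
  - intro E. now injection E as -> -> ->.
  - intro E. injection E as Ex -> Ey. apply sig_ext in Ex, Ey. now subst.
Qed.

Lemma path_coords_inj (g h : GPath L) : path_coords g = path_coords h -> g = h.
Proof.
  destruct h as [[[x q] y] hh]. intro E. apply sig_ext. now apply path_eq_iff_coords.
Qed.

Lemma valid_path (t : Triple L) : valid L t -> exists g : GPath L, path_coords g = triple_coords t.
Proof.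
  destruct t as [[a b] x]. intros [Sab Ra].
  assert (Rb : rfilt L x (src b)) by (rewrite <- Sab; exact Ra).
  pose (X := exist _ _ (dot_filter L a _ (proj2_sig x) Ra) : Filt L).
  pose (Y := exist _ _ (dot_filter L b _ (proj2_sig x) Rb) : Filt L).
  assert (HG : inG L (X, qmul (deg a) (qinv (deg b)), Y)).
  { exists (deg a), (deg b).
    do 3 (split; [reflexivity || apply deg_P|]).
    split; [exists a; split; [now apply dot_self|reflexivity]|].
    split; [exists b; split; [now apply dot_self|reflexivity]|].
    apply same_of_eq.
    change (pshift (pdot a (proj1_sig x)) (deg a) = pshift (pdot b (proj1_sig x)) (deg b)).
    rewrite !shift_dot; auto; apply (proj2_sig x). }
  now exists (exist _ _ HG).
Qed.

Lemma spi_rel_iff (t t' : Triple L) : valid L t -> valid L t' ->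
  spi_rel L t t' <-> triple_coords t = triple_coords t'.
Proof.
  destruct t as [[a b] x], t' as [[a' b'] x']. intros [Sab Rx] [Sab' Rx']. simpl. split.
  - intros (y & g & g' & _ & _ & Sag & Sbg & Sag' & Sbg' & Ex & Ex' & Ea & Eb).
    rewrite (pred_ext _ _ Ex : proj1_sig x = pdot g (proj1_sig y)),
      (pred_ext _ _ Ex' : proj1_sig x' = pdot g' (proj1_sig y)), !dot_comp, Ea, Eb
      by assumption.
    f_equal. f_equal.
    rewrite <- (frac_mul_r (deg a) (deg b) (deg g)), <- (frac_mul_r (deg a') (deg b') (deg g')).
    rewrite <- !deg_comp, Ea, Eb by assumption. reflexivity.
  - intro E. injection E as Ea Eq Eb.
    destruct (dot_eq_factor L a a' _ _ (proj2_sig x) (proj2_sig x') Rx Rx' Ea)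
      as (Z & xi & eta & FZ & Z1 & Z2 & S1 & S2 & Ex & Ex' & Ec).
    assert (Fb : is_filter L (pdot b (proj1_sig x)))
      by (apply dot_filter; [apply (proj2_sig x)|rewrite <- Sab; exact Rx]).
    exists (exist _ Z FZ), xi, eta. unfold rfilt. simpl.
    do 6 (split; [assumption || congruence|]).
    split; [now apply same_of_eq|]. split; [now apply same_of_eq|]. split; [exact Ec|].
    apply (filter_deg_inj _ _ Fb).
    + apply dot_comp_mem; [rewrite Ex; now apply dot_self|congruence].
    + rewrite Eb. apply dot_comp_mem; [rewrite Ex'; now apply dot_self|congruence].
    + rewrite !deg_comp by congruence. apply (mul_eq_of_frac_eq _ _ _ _ _ _ Eq).
      rewrite <- !deg_comp, Ec by assumption. reflexivity.
Qed.

Lemma class_path (C : SpiG L) :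
  exists g : GPath L, forall t, proj1_sig C t <-> valid L t /\ triple_coords t = path_coords g.
Proof.
  destruct (proj2_sig C) as (t0 & V0 & HC). destruct (valid_path t0 V0) as [g Hg].
  exists g. intro t. rewrite HC, Hg.
  split; intros [Vt R]; split; auto; [symmetry|]; apply spi_rel_iff; auto.
Qed.

Definition Phi (C : SpiG L) : GPath L :=
  proj1_sig (constructive_indefinite_description _ (class_path C)).

Lemma Phi_spec (C : SpiG L) t :
  proj1_sig C t <-> valid L t /\ triple_coords t = path_coords (Phi C).
Proof. unfold Phi. destruct (constructive_indefinite_description _ _) as [g Hg]. apply Hg. Qed.

Lemma class_valid (C : SpiG L) t : proj1_sig C t -> valid L t.
Proof. intro H. now apply Phi_spec in H. Qed.

Lemma class_inhabited (C : SpiG L) : exists t, proj1_sig C t.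
Proof.
  destruct (proj2_sig C) as (t & Vt & HC). exists t. apply HC.
  split; [exact Vt|]. now apply spi_rel_iff.
Qed.

Lemma Phi_components (C : SpiG L) a b x : proj1_sig C (a, b, x) ->
  proj1_sig (gp_x L (Phi C)) = pdot a (proj1_sig x) /\
  gp_q L (Phi C) = qmul (deg a) (qinv (deg b)) /\
  proj1_sig (gp_y L (Phi C)) = pdot b (proj1_sig x).
Proof. intro H. apply Phi_spec in H. destruct H as [_ H]. now injection H as -> -> ->. Qed.

Lemma Phi_inj (C C' : SpiG L) : Phi C = Phi C' -> C = C'.
Proof. intro E. apply sig_ext, pred_ext. intro t. rewrite !Phi_spec, E. tauto. Qed.

Lemma Phi_of_triple (t : Triple L) (g : GPath L) : valid L t -> triple_coords t = path_coords g ->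
  exists C, proj1_sig C t /\ Phi C = g.
Proof.
  intros Vt Et.
  pose (C := exist _ (fun u => valid L u /\ spi_rel L t u)
               (ex_intro _ t (conj Vt (fun u => iff_refl _))) : SpiG L).
  assert (Ct : proj1_sig C t) by (split; [exact Vt|]; now apply spi_rel_iff).
  exists C. split; [exact Ct|]. apply path_coords_inj. rewrite <- Et. now apply Phi_spec in Ct.
Qed.

Lemma path_as_triple (g : GPath L) (a b : M) :
  proj1_sig (gp_x L g) a -> proj1_sig (gp_y L g) b ->
  pshift (proj1_sig (gp_x L g)) (deg a) = pshift (proj1_sig (gp_y L g)) (deg b) ->
  gp_q L g = qmul (deg a) (qinv (deg b)) ->
  exists C (x : Filt L), proj1_sig x = pshift (proj1_sig (gp_x L g)) (deg a) /\
    proj1_sig C (a, b, x) /\ Phi C = g.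
Proof.
  intros Ha Hb Esh Eq.
  pose (x := exist _ _ (shift_filter L _ a (proj2_sig (gp_x L g)) Ha) : Filt L).
  assert (Va : proj1_sig x (vid (src a))) by now apply shift_vid.
  assert (Vb : proj1_sig x (vid (src b))) by (simpl; rewrite Esh; now apply shift_vid).
  destruct (Phi_of_triple (a, b, x) g) as (C & HC & EC).
  - split; [exact (filter_vid_unique _ _ (proj2_sig x) _ _ Va Vb)|exact Va].
  - unfold path_coords. simpl. rewrite dot_shift, Esh, dot_shift, Eq; auto;
      solve [apply (proj2_sig (gp_x L g)) | apply (proj2_sig (gp_y L g))].
  - now exists C, x.
Qed.

End SpielbergToPath.

Section GroupoidStructure.
Context {W : WQLO} (L : PGraph W).
Local Notation M := (Mor L).
Local Notation pdot := (pdot L).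
Local Notation Phi := (Phi L).

Lemma Phi_surj (g : GPath L) : exists C, Phi C = g.
Proof.
  destruct g as [[[x q] y] hg].
  pose proof hg as (m & n & _ & _ & Eq & (a & Ha & <-) & (b & Hb & <-) & Esh).
  destruct (path_as_triple L (exist _ _ hg) a b Ha Hb (pred_ext _ _ Esh) Eq) as (C & _ & _ & _ & EC).
  now exists C.
Qed.

Lemma Phi_composable (A B : SpiG L) : spi_composable L A B <-> gp_y L (Phi A) = gp_x L (Phi B).
Proof.
  split.
  - intros (a & b & x & c & d & y & HA & HB & E). apply sig_ext.
    destruct (Phi_components L A _ _ _ HA) as (_ & _ & ->).
    destruct (Phi_components L B _ _ _ HB) as (-> & _ & _).
    exact (pred_ext _ _ E).
  - intro E. destruct (class_inhabited L A) as [[[a b] x] HA], (class_inhabited L B) as [[[c d] y] HB].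
    destruct (Phi_components L A _ _ _ HA) as (_ & _ & Ey).
    destruct (Phi_components L B _ _ _ HB) as (Ex & _ & _).
    exists a, b, x, c, d, y. split; [exact HA|]. split; [exact HB|].
    apply same_of_eq. change (pdot b (proj1_sig x) = pdot c (proj1_sig y)).
    now rewrite <- Ey, <- Ex, E.
Qed.

Lemma triple_coords_comp (a b c d xi eta : M) (x y z : Filt L) :
  src a = rng xi -> src b = rng xi -> src c = rng eta -> src d = rng eta ->
  proj1_sig x = pdot xi (proj1_sig z) -> proj1_sig y = pdot eta (proj1_sig z) ->
  comp b xi = comp c eta ->
  triple_coords L (comp a xi, comp d eta, z) =
  (pdot a (proj1_sig x), qmul (qmul (deg a) (qinv (deg b))) (qmul (deg c) (qinv (deg d))),
   pdot d (proj1_sig y)).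
Proof.
  intros Sa Sb Sc Sd Ex Ey Ec. simpl. rewrite Ex, Ey, !dot_comp, !deg_comp by assumption.
  f_equal. f_equal. apply frac_mul. rewrite <- !deg_comp, Ec by assumption. reflexivity.
Qed.

Lemma Phi_prod_of_spi_prod (A B C : SpiG L) : spi_prod L A B C ->
  path_coords L (Phi C) =
  (proj1_sig (gp_x L (Phi A)), qmul (gp_q L (Phi A)) (gp_q L (Phi B)), proj1_sig (gp_y L (Phi B))).
Proof.
  intros (a & b & x & c & d & y & z & xi & eta & HA & HB & _ & _ & _ & S1 & S2 & S3 & S4 &
          Ex & Ey & Ec & HC).
  destruct (Phi_components L A _ _ _ HA) as (-> & -> & _).
  destruct (Phi_components L B _ _ _ HB) as (_ & -> & ->).
  rewrite <- (proj2 (proj1 (Phi_spec L C _) HC)).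
  apply triple_coords_comp; try assumption; exact (pred_ext _ _ Ex) || exact (pred_ext _ _ Ey).
Qed.

Lemma spi_prod_of_Phi_prod (A B C : SpiG L) : gp_y L (Phi A) = gp_x L (Phi B) ->
  path_coords L (Phi C) =
  (proj1_sig (gp_x L (Phi A)), qmul (gp_q L (Phi A)) (gp_q L (Phi B)), proj1_sig (gp_y L (Phi B))) ->
  spi_prod L A B C.
Proof.
  intros E EC.
  destruct (class_inhabited L A) as [[[a b] x] HA], (class_inhabited L B) as [[[c d] y] HB].
  destruct (Phi_components L A _ _ _ HA) as (Ax & Aq & Ay).
  destruct (Phi_components L B _ _ _ HB) as (Bx & Bq & By).
  destruct (class_valid L A _ HA) as [Sab Rx], (class_valid L B _ HB) as [Scd Ry].
  assert (Ebc : pdot b (proj1_sig x) = pdot c (proj1_sig y)) by now rewrite <- Ay, <- Bx, E.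
  rewrite Sab in Rx.
  destruct (dot_eq_factor L b c _ _ (proj2_sig x) (proj2_sig y) Rx Ry Ebc)
    as (Z & xi & eta & FZ & Z1 & Z2 & S1 & S2 & Ex & Ey & Ec).
  pose (z := exist _ Z FZ : Filt L).
  assert (HC : proj1_sig C (comp a xi, comp d eta, z)).
  { apply Phi_spec. split.
    - simpl. rewrite !src_comp by congruence. exact (conj (filter_vid_unique L _ FZ _ _ Z1 Z2) Z1).
    - rewrite EC, Ax, Aq, Bq, By. apply triple_coords_comp; assumption || congruence. }
  exists a, b, x, c, d, y, z, xi, eta.
  split; [exact HA|]. split; [exact HB|]. split; [now apply same_of_eq|].
  do 6 (split; [assumption || congruence|]).
  split; [now apply same_of_eq|]. split; [now apply same_of_eq|]. split; [exact Ec|exact HC].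
Qed.

Lemma Phi_inv (A B : SpiG L) : spi_inv L A B <->
  path_coords L (Phi B) = (proj1_sig (gp_y L (Phi A)), qinv (gp_q L (Phi A)), proj1_sig (gp_x L (Phi A))).
Proof.
  assert (Hinv : forall a b x, proj1_sig A (a, b, x) ->
    triple_coords L (b, a, x) =
    (proj1_sig (gp_y L (Phi A)), qinv (gp_q L (Phi A)), proj1_sig (gp_x L (Phi A)))).
  { intros a b x HA. destruct (Phi_components L A _ _ _ HA) as (-> & -> & ->).
    simpl. now rewrite frac_inv. }
  split.
  - intros (a & b & x & HA & HB). rewrite <- (Hinv a b x HA). now apply Phi_spec in HB.
  - intro E. destruct (class_inhabited L A) as [[[a b] x] HA].
    destruct (class_valid L A _ HA) as [Sab Rx].
    exists a, b, x. split; [exact HA|]. apply Phi_spec. rewrite E, Hinv by exact HA.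
    split; [|reflexivity]. split; [now symmetry|now rewrite <- Sab].
Qed.

Lemma Phi_units_bd (u : SpiG L) : spi_units_bd L u <-> path_units_bd L (Phi u).
Proof.
  assert (Hunit : forall (x : Filt L) v, rfilt L x v ->
    triple_coords L (vid v, vid v, x) = (proj1_sig x, qone, proj1_sig x)).
  { intros x v Hv. simpl. rewrite deg_vid, qmul_Vr, dot_vid; [reflexivity|apply (proj2_sig x)|exact Hv]. }
  split.
  - intros (x & v & Bx & Hv & Hu). exists x. split; [exact Bx|].
    apply path_eq_iff_coords. rewrite <- (Hunit x v Hv). now apply Phi_spec in Hu.
  - intros (x & Bx & E). apply path_eq_iff_coords in E.
    destruct (filter_nonempty L _ (proj2_sig x)) as [l Hl].
    pose proof (filter_vid L _ (proj2_sig x) l Hl) as Hv.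
    exists x, (rng l). split; [exact Bx|]. split; [exact Hv|].
    apply Phi_spec. rewrite E, Hunit by exact Hv. split; [|reflexivity].
    split; [reflexivity|now rewrite src_vid].
Qed.

End GroupoidStructure.

Section Topology.
Context {W : WQLO} (L : PGraph W).
Local Notation pre := (preceq L).
Local Notation M := (Mor L).
Local Notation pdot := (pdot L).
Local Notation pshift := (pshift L).

(* [cyl L A B x] unfolds to [pcyl A B (proj1_sig x)]. *)
Definition pcyl (A B : list M) (X : M -> Prop) : Prop :=
  (forall a, In a A -> X a) /\ (forall b, In b B -> ~ X b).

Definition cyl_nbhd (w : Filt L) (P : Filt L -> Prop) : Prop :=
  exists A B, cyl L A B w /\ forall x, cyl L A B x -> P x.

Lemma cyl_nbhd_mono (w : Filt L) (P Q : Filt L -> Prop) :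
  cyl_nbhd w P -> (forall x, P x -> Q x) -> cyl_nbhd w Q.
Proof. intros (A & B & Hw & HP) H. exists A, B. auto. Qed.

Lemma cyl_app A1 B1 A2 B2 (x : Filt L) :
  cyl L (A1 ++ A2) (B1 ++ B2) x <-> cyl L A1 B1 x /\ cyl L A2 B2 x.
Proof. unfold cyl. setoid_rewrite in_app_iff. firstorder. Qed.

Lemma cyl_nbhd_and (w : Filt L) (P Q : Filt L -> Prop) :
  cyl_nbhd w P -> cyl_nbhd w Q -> cyl_nbhd w (fun x => P x /\ Q x).
Proof.
  intros (A1 & B1 & H1 & HP) (A2 & B2 & H2 & HQ). exists (A1 ++ A2), (B1 ++ B2).
  split; [now apply cyl_app|]. intros x Hx. apply cyl_app in Hx. destruct Hx. auto.
Qed.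

Lemma cyl_nbhd_all {T : Type} (w : Filt L) (l : list T) (P : T -> Filt L -> Prop) :
  (forall t, In t l -> cyl_nbhd w (P t)) -> cyl_nbhd w (fun x => forall t, In t l -> P t x).
Proof.
  induction l as [|t l IH]; intro H.
  - exists [], []. split; [split; intros _ []|]. intros x _ t [].
  - apply (cyl_nbhd_mono _ (fun x => P t x /\ forall t', In t' l -> P t' x)).
    + apply cyl_nbhd_and; [apply H; now left|apply IH; intros; apply H; now right].
    + intros x [Ht Hl] t' [<-|Ht']; auto.
Qed.

Lemma cyl_nbhd_mem (w : Filt L) (a : M) : proj1_sig w a -> cyl_nbhd w (fun x => proj1_sig x a).
Proof.
  intro H. exists [a], []. split; [split; [intros b [<-|[]]; exact H|intros _ []]|].
  intros x [Hx _]. apply Hx. now left.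
Qed.

Lemma cyl_nbhd_nmem (w : Filt L) (a : M) : ~ proj1_sig w a -> cyl_nbhd w (fun x => ~ proj1_sig x a).
Proof.
  intro H. exists [], [a]. split; [split; [intros _ []|intros b [<-|[]]; exact H]|].
  intros x [_ Hx]. apply Hx. now left.
Qed.

Lemma dot_mem_nbhd (w : Filt L) (al z : M) :
  pdot al (proj1_sig w) z -> cyl_nbhd w (fun x => pdot al (proj1_sig x) z).
Proof.
  intros (g & Hg & Hz). apply (cyl_nbhd_mono _ _ _ (cyl_nbhd_mem w g Hg)). intros x Hx. now exists g.
Qed.

Lemma shift_cyl_nbhd (X : Filt L) (al : M) A B : proj1_sig X al ->
  pcyl A B (pshift (proj1_sig X) (deg al)) ->
  cyl_nbhd X (fun Y => proj1_sig Y al /\ pcyl A B (pshift (proj1_sig Y) (deg al))).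
Proof.
  intros Hal [HA HB].
  assert (SA : forall a, In a A -> src al = rng a /\ proj1_sig X (comp al a))
    by (intros a Ha; apply (shift_at L _ al a (proj2_sig X) Hal), HA, Ha).
  (* [comp al b] is junk unless [src al = rng b]; only such [b] can lie in a shift by [al]. *)
  destruct (list_filter_ex (fun b => src al = rng b) B) as [B' HB'].
  exists (al :: map (comp al) A), (map (comp al) B'). split; [split|].
  - intros c [<-|Hc]; [exact Hal|]. apply in_map_iff in Hc as (a & <- & Ha). apply SA, Ha.
  - intros c Hc HXc. apply in_map_iff in Hc as (b & <- & Hb). apply HB' in Hb as [Hb Hs].
    apply (HB b Hb), (shift_at L _ al b (proj2_sig X) Hal). auto.
  - intros Y [HY HY']. assert (Yal : proj1_sig Y al) by (apply HY; now left).
    split; [exact Yal|]. split.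
    + intros a Ha. apply (shift_at L _ al a (proj2_sig Y) Yal). split; [apply SA, Ha|].
      apply HY. right. now apply in_map.
    + intros b Hb Hsh. apply (shift_at L _ al b (proj2_sig Y) Yal) in Hsh as [Hs Hc].
      apply (HY' (comp al b)); [apply in_map, HB'; auto|exact Hc].
Qed.

Lemma tau_basic_open (B : Filt L -> Prop) : tau_basic L B -> F_open L B.
Proof.
  intros (a0 & bs & _ & HB) x Hx. pose proof (proj1 (HB x) Hx) as (g & Hg & Hc).
  exists [g], bs. split; [split|].
  - intros c [<-|[]]. exact Hg.
  - intros b Hb Hxb. destruct (filter_directed L _ (proj2_sig x) _ _ Hg Hxb) as (z & Hz & Hgz & Hbz).
    exact (proj2 (Hc z Hz Hgz) b Hb Hbz).
  - intros y [Hy Hy']. apply HB. exists g. split; [apply Hy; now left|].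
    intros z Hz Hgz. split.
    + exact (preceq_trans L _ _ _ (proj1 (Hc g Hg (preceq_refl L g))) Hgz).
    + intros b Hb Hbz. exact (Hy' b Hb (filter_hered L _ (proj2_sig y) _ _ Hbz Hz)).
Qed.

Section FinitelyAligned.
Hypothesis FA : finitely_aligned L.

(* If [b ∈ α·x] then [α g] lies in [αΛ ∩ bΛ], hence extends one of the finitely many
   [α μ] generating it, and [μ ∈ x]: so [b ∉ α·x] is a finite cylinder condition. *)
Lemma dot_nmem_nbhd (w : Filt L) (al b : M) :
  ~ pdot al (proj1_sig w) b -> cyl_nbhd w (fun x => ~ pdot al (proj1_sig x) b).
Proof.
  intro Hn. destruct (FA al b) as [J HJ].
  assert (HJk : forall k, In k J -> pre al k /\ pre b k)
    by (intros k Hk; apply HJ; exists k; auto using preceq_refl).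
  apply (cyl_nbhd_mono _
    (fun x => forall k, In k J -> forall mu, src al = rng mu -> k = comp al mu -> ~ proj1_sig x mu)).
  - apply cyl_nbhd_all. intros k Hk. destruct (HJk k Hk) as [(mu & Hs & ->) Hbk].
    apply (cyl_nbhd_mono _ _ _ (cyl_nbhd_nmem w mu (fun Hw => Hn (ex_intro _ mu (conj Hw (conj Hs Hbk)))))).
    intros x Hx mu' Hs' E. apply comp_cancel_l in E; [now subst|exact Hs|exact Hs'].
  - intros x Hx (g & Hg & Hs & Hbg).
    destruct (proj1 (HJ (comp al g)) (conj (preceq_comp L _ _ Hs) Hbg)) as (k & Hk & Hkg).
    destruct (HJk k Hk) as [(mu & Hmu & Ek) _].
    apply (Hx k Hk mu Hmu Ek). rewrite Ek in Hkg. apply preceq_cancel_l in Hkg; [|exact Hmu|exact Hs].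
    exact (filter_hered L _ (proj2_sig x) _ _ Hkg Hg).
Qed.

Lemma dot_cyl_nbhd (w : Filt L) (al : M) A B : pcyl A B (pdot al (proj1_sig w)) ->
  cyl_nbhd w (fun x => pcyl A B (pdot al (proj1_sig x))).
Proof.
  intros [HA HB]. unfold pcyl.
  apply cyl_nbhd_and; apply cyl_nbhd_all; intros; [apply dot_mem_nbhd|apply dot_nmem_nbhd]; auto.
Qed.

Lemma common_extensions_list (n : M) (Bl : list M) : exists ks,
  (forall k, In k ks -> pre n k /\ exists b, In b Bl /\ pre b k) /\
  (forall b l, In b Bl -> pre n l -> pre b l -> exists k, In k ks /\ pre k l).
Proof.
  induction Bl as [|b Bl (ks & H1 & H2)].
  - exists []. split; [intros ? []|intros ? ? []].
  - destruct (FA n b) as [J HJ]. exists (J ++ ks). split.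
    + intros k Hk. apply in_app_or in Hk as [Hk|Hk].
      * assert (Hnb : pre n k /\ pre b k) by (apply HJ; exists k; auto using preceq_refl).
        split; [apply Hnb|]. exists b. split; [now left|apply Hnb].
      * destruct (H1 k Hk) as (Hnk & b' & Hb' & Hb'k). split; [exact Hnk|].
        exists b'. split; [now right|exact Hb'k].
    + intros b' l [<-|Hb'] Hnl Hbl.
      * destruct (proj1 (HJ l) (conj Hnl Hbl)) as (k & Hk & Hkl).
        exists k. split; [apply in_or_app; now left|exact Hkl].
      * destruct (H2 b' l Hb' Hnl Hbl) as (k & Hk & Hkl).
        exists k. split; [apply in_or_app; now right|exact Hkl].
Qed.

(* The cylinder [A ⊆ x, Bl ∩ x = ∅] around [w] contains [Ê] for [E = nΛ \ ⋃ kΛ], where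
   [n ∈ w] bounds [A] and the [k] generate the [nΛ ∩ bΛ], [b ∈ Bl]. *)
Lemma cyl_nbhd_tau (w : Filt L) (P : Filt L -> Prop) :
  cyl_nbhd w P -> exists B, tau_basic L B /\ B w /\ forall x, B x -> P x.
Proof.
  intros (A & Bl & [HA HBl] & HP).
  destruct (filter_upper_bound L _ (proj2_sig w) A HA) as (n & Hn & HAn).
  destruct (common_extensions_list n Bl) as (ks & Hks1 & Hks2).
  assert (Wks : forall k, In k ks -> ~ proj1_sig w k).
  { intros k Hk Hw. destruct (Hks1 k Hk) as (_ & b & Hb & Hbk).
    exact (HBl b Hb (filter_hered L _ (proj2_sig w) _ _ Hbk Hw)). }
  exists (fun x : Filt L => exists g, proj1_sig x g /\ forall z, proj1_sig x z -> pre g z ->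
            pre n z /\ forall k, In k ks -> ~ pre k z).
  split; [|split].
  - exists n, ks. split; [|intro; reflexivity].
    intros k Hk. split; [apply Hks1, Hk|]. intros ->. exact (Wks n Hk Hn).
  - exists n. split; [exact Hn|]. intros z Hz Hnz. split; [exact Hnz|].
    intros k Hk Hkz. exact (Wks k Hk (filter_hered L _ (proj2_sig w) _ _ Hkz Hz)).
  - intros x (g & Hg & Hc). apply HP.
    assert (Hxn : proj1_sig x n)
      by exact (filter_hered L _ (proj2_sig x) _ _ (proj1 (Hc g Hg (preceq_refl L g))) Hg).
    split.
    + intros a Ha. exact (filter_hered L _ (proj2_sig x) _ _ (HAn a Ha) Hxn).
    + intros b Hb Hxb. destruct (filter_directed L _ (proj2_sig x) _ _ Hg Hxb) as (z & Hz & Hgz & Hbz).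
      destruct (Hc z Hz Hgz) as [Hnz Hno]. destruct (Hks2 b z Hb Hnz Hbz) as (k & Hk & Hkz).
      exact (Hno k Hk Hkz).
Qed.

End FinitelyAligned.
End Topology.

Section Homeomorphism.
Context {W : WQLO} (L : PGraph W).
Local Notation pshift := (pshift L).
Local Notation Phi := (Phi L).

Lemma Phi_Zbasic (U V : Filt L -> Prop) (C : SpiG L) a b x : proj1_sig C (a, b, x) ->
  U (gp_x L (Phi C)) -> V (gp_y L (Phi C)) -> Zbasic L (deg a) (deg b) U V (Phi C).
Proof.
  intros HC HU HV. destruct (class_valid L C _ HC) as [Sab Rx].
  assert (Rb : rfilt L x (src b)) by now rewrite <- Sab.
  destruct (Phi_components L C _ _ _ HC) as (Ex & Eq & Ey).
  split; [exact Eq|].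
  split; [exists a; rewrite Ex; split; [now apply dot_self|reflexivity]|].
  split; [exists b; rewrite Ey; split; [now apply dot_self|reflexivity]|].
  split; [|split; assumption].
  apply same_of_eq.
  change (pshift (proj1_sig (gp_x L (Phi C))) (deg a) = pshift (proj1_sig (gp_y L (Phi C))) (deg b)).
  rewrite Ex, Ey, !shift_dot; auto; apply (proj2_sig x).
Qed.

Lemma Phi_preimage_open (FA : finitely_aligned L) (V : GPath L -> Prop) :
  GPath_open L V -> SpiG_open L (fun C => V (Phi C)).
Proof.
  intros HV C HC.
  destruct (HV _ HC) as (m & n & U & U' & _ & _ & OU & OU' &
    (Eq & (al & Hal & <-) & (be & Hbe & <-) & Esh & HU & HU') & Hsub).
  destruct (path_as_triple L (Phi C) al be Hal Hbe (pred_ext _ _ Esh) Eq) as (C0 & w & _ & Hw & EC).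
  apply Phi_inj in EC. subst C0.
  destruct (Phi_components L C _ _ _ Hw) as (Xw & _ & Yw).
  destruct (OU _ HU) as (A1 & B1 & Hcyl1 & HU1), (OU' _ HU') as (A2 & B2 & Hcyl2 & HU2).
  change (pcyl L A1 B1 (proj1_sig (gp_x L (Phi C)))) in Hcyl1.
  change (pcyl L A2 B2 (proj1_sig (gp_y L (Phi C)))) in Hcyl2.
  rewrite Xw in Hcyl1. rewrite Yw in Hcyl2.
  destruct (cyl_nbhd_tau L FA w _ (cyl_nbhd_and L _ _ _
    (dot_cyl_nbhd L FA w al A1 B1 Hcyl1) (dot_cyl_nbhd L FA w be A2 B2 Hcyl2)))
    as (B & TB & Bw & HB).
  exists al, be, B. split; [exact TB|]. split; [now exists w|].
  intros C' (x & Bx & HC'). apply Hsub, (Phi_Zbasic _ _ C' al be x HC').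
  all: destruct (Phi_components L C' _ _ _ HC') as (Xx & _ & Yx); destruct (HB x Bx).
  - apply HU1. change (pcyl L A1 B1 (proj1_sig (gp_x L (Phi C')))). now rewrite Xx.
  - apply HU2. change (pcyl L A2 B2 (proj1_sig (gp_y L (Phi C')))). now rewrite Yx.
Qed.

Lemma Phi_image_open (V : GPath L -> Prop) : SpiG_open L (fun C => V (Phi C)) -> GPath_open L V.
Proof.
  intros HV g Hg. destruct (Phi_surj L g) as [C <-].
  destruct (HV C Hg) as (al & be & B & TB & (x & Bx & HC) & Hsub).
  destruct (Phi_components L C _ _ _ HC) as (Xx & _ & Yx).
  destruct (class_valid L C _ HC) as [Sab Rx].
  pose (U := fun X : Filt L => proj1_sig X al /\
               exists x', proj1_sig x' = pshift (proj1_sig X) (deg al) /\ B x').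
  exists (deg al), (deg be), U, (fun Y : Filt L => proj1_sig Y be).
  do 2 (split; [apply deg_P|]). split; [|split; [|split]].
  - intros X (HXal & x' & Ex' & Bx').
    destruct (tau_basic_open L B TB x' Bx') as (A0 & B0 & Hcyl & HB0).
    change (pcyl L A0 B0 (proj1_sig x')) in Hcyl. rewrite Ex' in Hcyl.
    apply (cyl_nbhd_mono L _ _ _ (shift_cyl_nbhd L X al A0 B0 HXal Hcyl)).
    intros Y [HYal HYcyl]. split; [exact HYal|].
    pose (y := exist _ _ (shift_filter L _ al (proj2_sig Y) HYal) : Filt L).
    exists y. split; [reflexivity|]. exact (HB0 y HYcyl).
  - intros Y HY. exact (cyl_nbhd_mem L Y be HY).
  - apply (Phi_Zbasic _ _ C al be x HC).
    + split; [rewrite Xx; now apply dot_self|]. exists x. split; [|exact Bx].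
      rewrite Xx, shift_dot; [reflexivity|apply (proj2_sig x)|exact Rx].
    + rewrite Yx. apply dot_self. now rewrite <- Sab.
  - intros g' (Eq & _ & _ & Esh & (Hal & x' & Ex' & Bx') & Hbe).
    destruct (path_as_triple L g' al be Hal Hbe (pred_ext _ _ Esh) Eq)
      as (C' & x'' & Ex'' & HC' & <-).
    apply Hsub. exists x''. split; [|exact HC'].
    replace x'' with x'; [exact Bx'|]. apply sig_ext. congruence.
Qed.

Lemma Phi_iso (FA : finitely_aligned L) : TG_iso (SpiTG L) (PathTG L) Phi.
Proof.
  split; [split|split; [|split; [|split]]].
  - exact (Phi_inj L).
  - exact (Phi_surj L).
  - exact (Phi_composable L).
  - intros A B C. simpl. rewrite path_eq_iff_coords. split.
    + intro H. split; [|exact (Phi_prod_of_spi_prod L A B C H)].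
      apply Phi_composable. destruct H as (a & b & x & c & d & y & _ & _ & _ & HA & HB & E & _).
      now exists a, b, x, c, d, y.
    + intros [E EC]. exact (spi_prod_of_Phi_prod L A B C E EC).
  - intros A B. simpl. rewrite path_eq_iff_coords. apply Phi_inv.
  - intro V. split; [apply Phi_preimage_open, FA|apply Phi_image_open].
Qed.

End Homeomorphism.

Theorem theorem6p6 (W : WQLO) (L : PGraph W) :
  finitely_aligned L ->
  (exists Phi : SpiTG L -> PathTG L,
     (forall (C : SpiG L) a b x, proj1_sig C (a, b, x) ->
        same L (proj1_sig (gp_x L (Phi C))) (dot L a x) /\
        gp_q L (Phi C) = qmul (deg a) (qinv (deg b)) /\
        same L (proj1_sig (gp_y L (Phi C))) (dot L b x)) /\
     TG_iso (SpiTG L) (PathTG L) Phi) /\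
  (exists Psi : reduction (SpiTG L) (spi_units_bd L) ->
                reduction (PathTG L) (path_units_bd L),
     TG_iso (reduction (SpiTG L) (spi_units_bd L))
            (reduction (PathTG L) (path_units_bd L)) Psi).
Proof.
  intro FA. split.
  - exists (Phi L). split; [|exact (Phi_iso L FA)].
    intros C a b x HC. destruct (Phi_components L C a b x HC) as (Ex & Eq & Ey).
    split; [|split; [exact Eq|]]; apply same_of_eq; assumption.
  - exists (reduction_map _ _ _ _ _ (Phi_iso L FA) (Phi_units_bd L)).
    apply reduction_map_iso.
Qed.
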